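(* Let $0<\mu<\lambda_{\min}(A)$ and $\ell\ge1$, and assume that $R_0,\dots,R_{\ell-1}$ (from BCG) have full column rank ($R_\ell$ may be rank deficient, e.g. zero). Define recursively $\Upsilon^{(\mu)}_0=\mu^{-1}I_m$, $\Theta^{(\mu)}_j=(R_j^TR_j)\Upsilon^{(\mu)}_j$, and for $j=1,\dots,\ell$ $$\Upsilon^{(\mu)}_j=\big[\mu(\Theta^{(\mu)}_{j-1}-\Theta_{j-1})+R_j^TR_j\big]^{-1}(\Theta^{(\mu)}_{j-1}-\Theta_{j-1}).$$ Then these quantities are well defined, and for every $k=1,\dots,\ell$, $$\Theta^{(\mu)}_{k-1}-\mathfrak{E}_{k-1}=\sum_{j=k}^{\ell}B^{(\mu)}_j+\big(\Theta^{(\mu)}_\ell-\mathfrak{E}_\ell\big),\qquad B^{(\mu)}_j=(\Theta^{(\mu)}_{j-1}-\Theta_{j-1})-\Theta^{(\mu)}_j,$$ where each $B^{(\mu)}_j$, $j=1,\dots,\ell$, is symmetric positive definite. If moreover $R_\ell=0$, then $\Theta^{(\mu)}_{k-1}-\mathfrak{E}_{k-1}$ is symmetric positive definite for every $k=1,\dots,\ell$.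
   Context: Let $A\in\mathbb{R}^{n\times n}$ be symmetric positive definite, let $B,X_0\in\mathbb{R}^{n\times m}$, and let $X=A^{-1}B$. The block conjugate gradient (BCG) algorithm sets $R_0=B-AX_0$, $P_0=R_0$, and for $k=1,2,\dots$: $\Upsilon_{k-1}=(P_{k-1}^TAP_{k-1})^{-1}(R_{k-1}^TR_{k-1})$, $X_k=X_{k-1}+P_{k-1}\Upsilon_{k-1}$, $R_k=R_{k-1}-AP_{k-1}\Upsilon_{k-1}$, $\Xi_k=(R_{k-1}^TR_{k-1})^{-1}(R_k^TR_k)$, $P_k=R_k+P_{k-1}\Xi_k$. Define $\mathfrak{E}_k=(X-X_k)^TA(X-X_k)$ and $\Theta_k=(R_k^TR_k)\Upsilon_k$. $\lambda_{\min}(A)$ denotes the smallest eigenvalue of $A$. *)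

From HB Require Import structures.
From mathcomp Require Import all_boot all_order all_algebra.
From mathcomp Require Import reals.
Set Implicit Arguments. Unset Strict Implicit. Unset Printing Implicit Defensive.
Import Order.TTheory GRing.Theory Num.Theory.
Local Open Scope ring_scope.

Section BCG.
Variables (R : realType) (n m : nat).

Definition spd (k : nat) (M : 'M[R]_k) : Prop :=
  M^T = M /\ forall v : 'cV[R]_k, v != 0 -> 0 < (v^T *m M *m v) 0 0.

Definition lt_lambda_min (k : nat) (mu : R) (M : 'M[R]_k) : Prop :=
  forall a : R, eigenvalue M a -> mu < a.

Variables (A : 'M[R]_n) (B X0 : 'M[R]_(n, m)).

Fixpoint bcg_state (k : nat) : 'M[R]_(n, m) * 'M[R]_(n, m) * 'M[R]_(n, m) :=
  match k with
  | 0 => (X0, B - A *m X0, B - A *m X0)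
  | k'.+1 =>
      let: (X, Rk, P) := bcg_state k' in
      let Ups := invmx (P^T *m A *m P) *m (Rk^T *m Rk) in
      let X' := X + P *m Ups in
      let R' := Rk - A *m P *m Ups in
      let Xi := invmx (Rk^T *m Rk) *m (R'^T *m R') in
      (X', R', R' + P *m Xi)
  end.

Definition bcgX k := (bcg_state k).1.1.
Definition bcgR k := (bcg_state k).1.2.
Definition bcgP k := (bcg_state k).2.

Definition RtR k : 'M[R]_m := (bcgR k)^T *m bcgR k.

Definition Ups k : 'M[R]_m :=
  invmx ((bcgP k)^T *m A *m bcgP k) *m RtR k.
Definition Theta k : 'M[R]_m := RtR k *m Ups k.

Definition Xsol : 'M[R]_(n, m) := invmx A *m B.
Definition Err k : 'M[R]_m := (Xsol - bcgX k)^T *m A *m (Xsol - bcgX k).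

Variable mu : R.

Fixpoint Ups_mu (k : nat) : 'M[R]_m :=
  match k with
  | 0 => (mu^-1)%:M
  | k'.+1 =>
      let D := RtR k' *m Ups_mu k' - Theta k' in
      invmx (mu *: D + RtR k'.+1) *m D
  end.

Definition Theta_mu k : 'M[R]_m := RtR k *m Ups_mu k.

Definition Mmu j : 'M[R]_m := mu *: (Theta_mu j.-1 - Theta j.-1) + RtR j.

Definition Bmu j : 'M[R]_m := (Theta_mu j.-1 - Theta j.-1) - Theta_mu j.

End BCG.

From HB Require Import structures.
From mathcomp Require Import all_boot all_order all_algebra.
From mathcomp Require Import reals classical_sets.
From mathcomp Require Import ring lra.
Set Implicit Arguments. Unset Strict Implicit. Unset Printing Implicit Defensive.
Import Order.TTheory GRing.Theory Num.Theory.
Local Open Scope ring_scope.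

(* Q := A - mu I is positive definite because mu < lambda_min(A).  Making the
   BCG residuals R_k successively Q-conjugate gives blocks Y_k with
   Z_k := Y_k^T Q Y_k positive definite.  With Pi_k := P_k^T A P_k and
   S_k := R_k^T R_k, induction on k shows that K_k := Pi_k - Z_k is positive
   definite and Theta^(mu)_k = S_k K_k^-1 S_k.  Since Pi_k = K_k + Z_k,
   D_k := Theta^(mu)_k - Theta_k = S_k (K_k + K_k Z_k^-1 K_k)^-1 S_k is positive
   definite; hence mu D_(j-1) + S_j is invertible and
   B^(mu)_j = mu D_(j-1) (mu D_(j-1) + S_j)^-1 D_(j-1) is positive definite.
   The decomposition telescopes E_k - E_(k+1) = Theta_k, and R_l = 0 makes the
   remainder Theta^(mu)_l - E_l vanish. *)

Section MatrixInverse.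
Variable R : comUnitRingType.
Implicit Types k n p : nat.

Lemma mulmx_unit_eq0 k p (M : 'M[R]_k) (v : 'M[R]_(k, p)) :
  M \in unitmx -> M *m v = 0 -> v = 0.
Proof. by move=> uM Mv0; rewrite -(mulKmx uM v) Mv0 mulmx0. Qed.

Lemma invmx_eq k (M N : 'M[R]_k) : M *m N = 1%:M -> invmx M = N.
Proof.
move=> MN; have [uM _] := mulmx1_unit MN.
by rewrite -[invmx M]mulmx1 -MN mulKmx.
Qed.

Lemma invmxM k (M N : 'M[R]_k) : M \in unitmx -> N \in unitmx ->
  invmx (M *m N) = invmx N *m invmx M.
Proof.
move=> uM uN; apply: invmx_eq.
by rewrite -mulmxA [N *m _]mulmxA mulmxV // mul1mx mulmxV.
Qed.

Lemma mulmx_invmx_sub k (K Z : 'M[R]_k) : Z \in unitmx ->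
  (K + Z) *m invmx Z *m (K + Z) - (K + Z) = K + K *m invmx Z *m K.
Proof.
move=> uZ; rewrite !mulmxDl !mulmxDr mulmxV // mulmxKV // !mul1mx.
by rewrite addrK addrC.
Qed.

Lemma invmx_sub_invmx_add k (K Z : 'M[R]_k) :
  K \in unitmx -> Z \in unitmx -> K + Z \in unitmx ->
  invmx K - invmx (K + Z) = invmx (K + K *m invmx Z *m K).
Proof.
move=> uK uZ uKZ; have eKZ : K *m invmx Z *m (K + Z) = K + K *m invmx Z *m K.
  by rewrite mulmxDr mulmxKV // addrC.
symmetry; apply: invmx_eq; rewrite -eKZ mulmxBr mulmxK // eKZ mulmxDl mulmxK //.
by rewrite mulmxV // addrK.
Qed.

Lemma invmx_qf_update n p (A : 'M[R]_n) (Q P : 'M[R]_(n, p)) (U : 'M[R]_p) :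
  A^T = A -> A \in unitmx ->
  Q^T *m invmx A *m Q - (Q - A *m P *m U)^T *m invmx A *m (Q - A *m P *m U) =
  Q^T *m P *m U + U^T *m (P^T *m Q) - U^T *m (P^T *m A *m P) *m U.
Proof.
move=> sA uA.
have -> : (Q - A *m P *m U)^T = Q^T - U^T *m P^T *m A.
  by rewrite linearB /= !trmx_mul sA mulmxA.
rewrite !mulmxBl !mulmxBr -!mulmxA mulKmx // mulKVmx // !mulmxA.
move: (Q^T *m invmx A *m Q) (Q^T *m P *m U) (U^T *m P^T *m Q) (U^T *m P^T *m A *m P *m U).
by move=> a b c d; rewrite !opprB addrA addrC !addrA subrK addrC addrA.
Qed.

Lemma qf_sub_proj n p (Q : 'M[R]_n) (Y V : 'M[R]_(n, p)) :
  Q^T = Q -> Y^T *m Q *m Y \in unitmx ->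
  (V - Y *m invmx (Y^T *m Q *m Y) *m (Y^T *m Q *m V))^T *m Q *m
    (V - Y *m invmx (Y^T *m Q *m Y) *m (Y^T *m Q *m V)) =
  V^T *m Q *m V - (Y^T *m Q *m V)^T *m invmx (Y^T *m Q *m Y) *m (Y^T *m Q *m V).
Proof.
move=> sQ; set Z := Y^T *m Q *m Y => uZ.
have sZ : Z^T = Z by rewrite /Z !trmx_mul trmxK sQ mulmxA.
have trYQV : (Y^T *m Q *m V)^T = V^T *m Q *m Y by rewrite !trmx_mul trmxK sQ mulmxA.
have -> : (V - Y *m invmx Z *m (Y^T *m Q *m V))^T = V^T - V^T *m Q *m Y *m invmx Z *m Y^T.
  by rewrite linearB /= trmx_mul trYQV trmx_mul trmx_inv sZ !mulmxA.
have ZK (X : 'M[R]_p) : X *m Y^T *m Q *m Y *m invmx Z = X.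
  have -> : X *m Y^T *m Q *m Y = X *m Z by rewrite /Z !mulmxA.
  exact: mulmxK.
rewrite trYQV !mulmxBl !mulmxBr !mulmxA ZK.
by rewrite subrr subr0.
Qed.

End MatrixInverse.

Section Definite.
Variable R : realType.
Implicit Types k p : nat.

Definition psd k (M : 'M[R]_k) : Prop :=
  M^T = M /\ forall v : 'cV[R]_k, 0 <= (v^T *m M *m v) 0 0.

Lemma cV_sqnorm_ge0 k (v : 'cV[R]_k) : 0 <= (v^T *m v) 0 0.
Proof. by rewrite mxE; apply: sumr_ge0 => i _; rewrite mxE -expr2 sqr_ge0. Qed.

Lemma cV_sqnorm_gt0 k (v : 'cV[R]_k) : v != 0 -> 0 < (v^T *m v) 0 0.
Proof.
move=> nz; have [i vi] : exists i, v i 0 != 0.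
  apply/existsP; apply: contraR nz; rewrite negb_exists => /forallP v0.
  by apply/eqP/matrixP => a b; rewrite mxE (ord1 b); apply/eqP/negPn/v0.
rewrite mxE (bigD1 i) //= mxE ltr_pwDl //; first by rewrite lt0r mulf_neq0 //= -expr2 sqr_ge0.
by apply: sumr_ge0 => j _; rewrite mxE -expr2 sqr_ge0.
Qed.

Lemma spd_sym k (M : 'M[R]_k) : spd M -> M^T = M. Proof. by case. Qed.

Lemma spd_psd k (M : 'M[R]_k) : spd M -> psd M.
Proof.
case=> sM pM; split=> // v; have [->|nz] := eqVneq v 0; first by rewrite mulmx0 mxE.
exact/ltW/pM.
Qed.

Lemma spd_unitmx k (M : 'M[R]_k) : spd M -> M \in unitmx.
Proof.
case=> _ pM; rewrite -row_free_unit; apply: inj_row_free => w wM.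
apply/eqP/negPn/negP => nz.
have nzT : w^T != 0 by apply: contra nz => /eqP wT0; rewrite -[w]trmxK wT0 trmx0.
by move: (pM _ nzT); rewrite trmxK wM mul0mx mxE ltxx.
Qed.

Lemma qf_congr k p (M : 'M[R]_k) (C : 'M[R]_(k, p)) (v : 'cV[R]_p) :
  v^T *m (C^T *m M *m C) *m v = (C *m v)^T *m M *m (C *m v).
Proof. by rewrite trmx_mul !mulmxA. Qed.

Lemma spd_congr k p (M : 'M[R]_k) (C : 'M[R]_(k, p)) :
  spd M -> (forall v : 'cV[R]_p, C *m v = 0 -> v = 0) -> spd (C^T *m M *m C).
Proof.
case=> sM pM injC; split; first by rewrite !trmx_mul trmxK sM mulmxA.
move=> v nz; rewrite qf_congr; apply: pM; apply: contra nz => /eqP Cv0.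
by rewrite (injC _ Cv0).
Qed.

Lemma psd_congr k p (M : 'M[R]_k) (C : 'M[R]_(k, p)) :
  psd M -> psd (C^T *m M *m C).
Proof.
case=> sM pM; split; first by rewrite !trmx_mul trmxK sM mulmxA.
by move=> v; rewrite qf_congr.
Qed.

Lemma spd_unit_congr k (M C : 'M[R]_k) :
  spd M -> C \in unitmx -> spd (C^T *m M *m C).
Proof. by move=> pM uC; apply: spd_congr => // v; apply: mulmx_unit_eq0. Qed.

Lemma spdD_psd k (M N : 'M[R]_k) : spd M -> psd N -> spd (M + N).
Proof.
case=> sM pM [sN pN]; split; first by rewrite linearD /= sM sN.
move=> v nz; rewrite mulmxDr mulmxDl mxE; have := pM v nz; have := pN v; lra.
Qed.

Lemma psdD k (M N : 'M[R]_k) : psd M -> psd N -> psd (M + N).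
Proof.
case=> sM pM [sN pN]; split; first by rewrite linearD /= sM sN.
by move=> v; rewrite mulmxDr mulmxDl mxE addr_ge0.
Qed.

Lemma psd0 k : psd (0 : 'M[R]_k).
Proof. by split=> [|v]; rewrite ?trmx0 // mulmx0 mul0mx mxE. Qed.

Lemma spd_sum_nat k (F : nat -> 'M[R]_k) a b : (a < b)%N ->
  (forall i, (a <= i < b)%N -> spd (F i)) -> spd (\sum_(a <= i < b) F i).
Proof.
move=> ab pF; rewrite big_ltn //; apply: spdD_psd; first by apply: pF; rewrite leqnn.
rewrite big_nat_cond; apply: big_ind; [exact: psd0 | exact: psdD |].
move=> i /andP[/andP[ai ib] _]; apply/spd_psd/pF.
by rewrite ib andbT ltnW.
Qed.

Lemma spdZ k (a : R) (M : 'M[R]_k) : 0 < a -> spd M -> spd (a *: M).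
Proof.
move=> a0 [sM pM]; split; first by rewrite linearZ /= sM.
by move=> v nz; rewrite -scalemxAr -scalemxAl mxE mulr_gt0 // pM.
Qed.

Lemma spd1 k : spd (1%:M : 'M[R]_k).
Proof. by split=> [|v nz]; rewrite ?trmx1 // mulmx1 cV_sqnorm_gt0. Qed.

Lemma psd_gram k p (C : 'M[R]_(k, p)) : psd (C^T *m C).
Proof. by rewrite -[C^T]mulmx1; apply/psd_congr/spd_psd/spd1. Qed.

Lemma spd_gram k p (C : 'M[R]_(k, p)) : \rank C = p -> spd (C^T *m C).
Proof.
move=> rkC; rewrite -[C^T]mulmx1; apply: spd_congr; first exact: spd1.
have freeCT : row_free C^T by rewrite /row_free mxrank_tr rkC.
move=> v Cv0; apply: trmx_inj; rewrite trmx0; apply/eqP.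
by rewrite -(mulmx_free_eq0 _ freeCT) -trmx_mul Cv0 trmx0.
Qed.

Lemma spd_invmx k (M : 'M[R]_k) : spd M -> spd (invmx M).
Proof.
move=> pM; have uM := spd_unitmx pM.
have -> : invmx M = (invmx M)^T *m M *m invmx M.
  by rewrite trmx_inv (spd_sym pM) mulmxK.
by apply: spd_unit_congr; rewrite ?unitmx_inv.
Qed.

Lemma spd_add_sandwich k (K Z : 'M[R]_k) : spd K -> spd Z -> spd (K + K *m invmx Z *m K).
Proof.
move=> pK pZ; apply: spdD_psd => //.
by rewrite -{1}(spd_sym pK); apply/psd_congr/spd_psd/spd_invmx.
Qed.

Lemma mul_invmx_scale_add k (mu : R) (D T : 'M[R]_k) : 0 < mu -> spd D -> spd T ->
  T *m (invmx (mu *: D + T) *m D) = T *m invmx (mu *: T + T *m invmx D *m T) *m T.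
Proof.
move=> mu0 pD pT; have uD := spd_unitmx pD; have uT := spd_unitmx pT.
have uW : mu *: D + T \in unitmx.
  by apply/spd_unitmx/spdD_psd; [exact: spdZ | exact: spd_psd].
have -> : mu *: T + T *m invmx D *m T = T *m invmx D *m (mu *: D + T).
  by rewrite mulmxDr -scalemxAr mulmxKV.
rewrite invmxM ?unitmx_mul ?unitmx_inv ?uT ?uD // invmxM ?unitmx_inv // invmxK.
by rewrite !mulmxA mulmxKV.
Qed.

Lemma spd_sub_mul_invmx_scale_add k (mu : R) (D T : 'M[R]_k) : 0 < mu -> spd D -> psd T ->
  spd (D - T *m (invmx (mu *: D + T) *m D)).
Proof.
move=> mu0 pD pT; have pW : spd (mu *: D + T) by apply: spdD_psd => //; exact: spdZ.
have uW := spd_unitmx pW.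
have -> : D - T *m (invmx (mu *: D + T) *m D) = mu *: (D *m invmx (mu *: D + T) *m D).
  move: uW; set W := mu *: D + T => uW.
  have -> : T = W - mu *: D by rewrite /W addrC addKr.
  rewrite mulmxBl [W *m _]mulmxA mulmxV // mul1mx -scalemxAl mulmxA.
  by rewrite opprB addrC subrK.
apply: spdZ => //; rewrite -{1}(spd_sym pD).
by apply: spd_unit_congr; [exact: spd_invmx | exact: spd_unitmx].
Qed.

End Definite.

Section LambdaMin.
Variable R : realType.
Variable k : nat.
Implicit Types (M N : 'M[R]_k) (x : 'cV[R]_k).

Lemma qf_sub_scalar M (a : R) x :
  (x^T *m (M - a%:M) *m x) 0 0 = (x^T *m M *m x) 0 0 - a * (x^T *m x) 0 0.
Proof. by rewrite mulmxBr mulmxBl mul_mx_scalar -scalemxAl !mxE. Qed.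

Lemma qf_le_sum_norm N x :
  (x^T *m N *m x) 0 0 <= (\sum_i \sum_j `|N j i|) * (x^T *m x) 0 0.
Proof.
set s := (x^T *m x) 0 0.
have sq_le i : (x i 0) ^+ 2 <= s.
  rewrite /s mxE (bigD1 i) //= mxE -expr2 lerDl.
  by apply: sumr_ge0 => j _; rewrite mxE -expr2 sqr_ge0.
have prod_le i j : `|x i 0| * `|x j 0| <= s.
  have := sq_le i; have := sq_le j; have := sqr_ge0 (`|x i 0| - `|x j 0|).
  rewrite -!(real_normK (num_real (x _ 0))).
  have := normr_ge0 (x i 0); have := normr_ge0 (x j 0); nra.
rewrite mxE big_distrl /=; apply: ler_sum => i _.
rewrite mxE !big_distrl /=; apply: ler_sum => j _; rewrite !mxE.
apply: (le_trans (ler_norm _)); rewrite !normrM.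
have := prod_le i j; have := normr_ge0 (N j i).
have := normr_ge0 (x i 0); have := normr_ge0 (x j 0); nra.
Qed.

Lemma qf_sub_scale_inv M N x (t : R) :
  N^T = N -> M *m N = 1%:M -> N *m M = 1%:M ->
  (x - t *: (N *m x))^T *m M *m (x - t *: (N *m x)) =
  x^T *m M *m x - (2 * t) *: (x^T *m x) + (t ^+ 2) *: (x^T *m N *m x).
Proof.
move=> sN MN NM.
have -> : (x - t *: (N *m x))^T = x^T - t *: (x^T *m N).
  by rewrite linearB /= linearZ /= trmx_mul sN.
rewrite !mulmxBl !mulmxBr -?scalemxAl -?scalemxAr -?scalemxAl.
rewrite -[x^T *m M *m (N *m x)]mulmxA [M *m _]mulmxA MN mul1mx.
rewrite -[x^T *m N *m M]mulmxA NM mulmx1 mulmxA.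
by apply/matrixP => i j; rewrite !mxE; ring.
Qed.

(* With [N = M^-1] and [t = 1 / (1 + sum |N_ij|)], expanding the nonnegative
   form at [x - t N x] yields [t |x|^2 <= x^T M x]. *)
Lemma psd_unitmx_coercive M : psd M -> M \in unitmx ->
  exists2 c : R, 0 < c & forall x, c * (x^T *m x) 0 0 <= (x^T *m M *m x) 0 0.
Proof.
move=> [sM psdM] uM; set N := invmx M.
have sN : N^T = N by rewrite /N trmx_inv sM.
set K := \sum_i \sum_j `|N j i|.
have K0 : 0 <= K by do 2![apply: sumr_ge0 => ? _].
set t := (K + 1)^-1; have t0 : 0 < t by rewrite invr_gt0; lra.
have tK : t * K = 1 - t.
  have K1 : K + 1 != 0 by apply/eqP; lra.
  by rewrite /t; field.
exists t => // x; have := psdM (x - t *: (N *m x)).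
rewrite qf_sub_scale_inv ?mulmxV ?mulVmx //.
have := qf_le_sum_norm N x; have := cV_sqnorm_ge0 x; rewrite -/K.
move: (x^T *m M *m x) (x^T *m x) (x^T *m N *m x) => a b c; rewrite !mxE.
move: (a 0 0) (b 0 0) (c 0 0) => {}a {}b {}c b0 cKb form_ge0.
have : t ^+ 2 * c <= t * (1 - t) * b.
  by rewrite -tK expr2 -!mulrA; do 2!(apply: ler_wpM2l; first exact: ltW).
nra.
Qed.

(* [mu] lies strictly below the infimum [lam] of the Rayleigh quotient, and
   [lam] is an eigenvalue: otherwise [A - lam] would be invertible and
   coercive, pushing the infimum above [lam]. *)
Lemma spd_sub_lt_lambda_min (A : 'M[R]_k) (mu : R) :
  spd A -> lt_lambda_min mu A -> spd (A - mu%:M).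
Proof.
move=> pA mu_lt; have sA := spd_sym pA.
have symB a : (A - a%:M)^T = A - a%:M by rewrite linearB /= sA tr_scalar_mx.
split=> [|v nz]; first exact: symB.
pose E : set R := fun r => exists2 x : 'cV[R]_k, x != 0 &
   r = (x^T *m A *m x) 0 0 / (x^T *m x) 0 0.
have lbE : has_lbound E.
  exists 0 => r [x x0 ->]; apply: divr_ge0; [exact/ltW/pA.2 | exact/ltW/cV_sqnorm_gt0].
set lam := inf E.
have lam_le x : x != 0 -> lam * (x^T *m x) 0 0 <= (x^T *m A *m x) 0 0.
  move=> x0; rewrite -ler_pdivlMr ?cV_sqnorm_gt0 //.
  by apply: (ge_inf lbE); exists x.
have psdB : psd (A - lam%:M).
  split=> // x; have [->|x0] := eqVneq x 0; first by rewrite mulmx0 mxE.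
  by rewrite qf_sub_scalar subr_ge0 lam_le.
have nuB : A - lam%:M \notin unitmx.
  apply/negP => /(psd_unitmx_coercive psdB) [c c0 coerc].
  suff : lam + c <= lam by lra.
  apply: lb_le_inf; first by exists ((v^T *m A *m v) 0 0 / (v^T *m v) 0 0); exists v.
  move=> r [x x0 ->]; rewrite ler_pdivlMr ?cV_sqnorm_gt0 //.
  by have := coerc x; rewrite qf_sub_scalar; lra.
have lam_eig : eigenvalue A lam.
  by rewrite /eigenvalue /eigenspace kermx_eq0 row_free_unit.
rewrite qf_sub_scalar subr_gt0.
have := lam_le v nz; have := mu_lt _ lam_eig; have := cV_sqnorm_gt0 nz; nra.
Qed.

End LambdaMin.

Section Conjugacy.
Variables (R : realType) (n m : nat) (A : 'M[R]_n) (B X0 : 'M[R]_(n, m)).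

Local Notation Rk := (bcgR A B X0).
Local Notation Pk := (bcgP A B X0).
Local Notation Xk := (bcgX A B X0).
Local Notation S := (RtR A B X0).
Local Notation Pi k := ((Pk k)^T *m A *m Pk k).
Local Notation Xi k := (invmx (S k) *m S k.+1).

Lemma bcgRS k : Rk k.+1 = Rk k - A *m Pk k *m Ups A B X0 k.
Proof. by rewrite /Ups /RtR /bcgR /bcgP /=; case: (bcg_state A B X0 k) => [[]]. Qed.

Lemma bcgXS k : Xk k.+1 = Xk k + Pk k *m Ups A B X0 k.
Proof. by rewrite /Ups /RtR /bcgX /bcgR /bcgP /=; case: (bcg_state A B X0 k) => [[]]. Qed.

Lemma bcgPS k : Pk k.+1 = Rk k.+1 + Pk k *m Xi k.
Proof. by rewrite /RtR /bcgR /bcgP /=; case: (bcg_state A B X0 k) => [[]]. Qed.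

Lemma bcgP0 : Pk 0 = Rk 0. Proof. by []. Qed.

Lemma bcgR_residual k : Rk k = B - A *m Xk k.
Proof. by elim: k => [//|k IH]; rewrite bcgRS bcgXS IH mulmxDr mulmxA opprD addrA. Qed.

Lemma bcgR_of_P k : Rk k.+1 = Pk k.+1 - Pk k *m Xi k.
Proof. by rewrite bcgPS addrK. Qed.

Lemma trmxR_eq0_of_P i p (Y : 'M[R]_(n, p)) :
  (forall j, (j <= i)%N -> (Pk j)^T *m Y = 0) -> (Rk i)^T *m Y = 0.
Proof.
case: i => [|i] PY0; first by rewrite -bcgP0 PY0.
by rewrite bcgR_of_P linearB /= trmx_mul mulmxBl -mulmxA !PY0 ?mulmx0 ?subr0.
Qed.

Lemma trmxP_eq0_of_R i p (Y : 'M[R]_(n, p)) :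
  (forall j, (j <= i)%N -> (Rk j)^T *m Y = 0) -> (Pk i)^T *m Y = 0.
Proof.
elim: i => [|i IH] RY0; first by rewrite bcgP0 RY0.
rewrite bcgPS linearD /= trmx_mul mulmxDl -mulmxA IH ?RY0 ?mulmx0 ?addr0 //.
by move=> j ji; apply/RY0/leqW.
Qed.

Lemma RtR_sym k : (S k)^T = S k.
Proof. by rewrite /RtR trmx_mul trmxK. Qed.

Hypothesis pA : spd A.
Let sA : A^T = A := spd_sym pA.

Lemma PtAP_sym k : (Pi k)^T = Pi k.
Proof. by rewrite !trmx_mul trmxK sA mulmxA. Qed.

Variable l : nat.
Hypothesis pS : forall i, (i < l)%N -> spd (S i).

Lemma RtR_unitmx k : (k < l)%N -> S k \in unitmx.
Proof. by move=> kl; apply/spd_unitmx/pS. Qed.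

(* Bundled because the three relations are proved by a joint induction. *)
Definition bcg_conj k := forall i j, (i < j)%N -> (j <= k)%N ->
  [/\ (Rk i)^T *m Rk j = 0, (Pk i)^T *m A *m Pk j = 0 & (Pk i)^T *m Rk j = 0].

Lemma bcg_conj_le k k' : (k' <= k)%N -> bcg_conj k -> bcg_conj k'.
Proof. by move=> k'k C i j ij jk'; apply: C ij (leq_trans jk' k'k). Qed.

Lemma PtR_diag k : bcg_conj k -> (Pk k)^T *m Rk k = S k.
Proof.
case: k => [|k] C; first by rewrite bcgP0.
rewrite bcgPS linearD /= mulmxDl trmx_mul -mulmxA.
by have [_ _ ->] := C k k.+1 (ltnSn k) (leqnn _); rewrite mulmx0 addr0.
Qed.

Lemma RtP_diag k : bcg_conj k -> (Rk k)^T *m Pk k = S k.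
Proof. by move=> C; rewrite -[LHS]trmxK trmx_mul trmxK PtR_diag // RtR_sym. Qed.

Lemma RtAP_diag k : bcg_conj k -> (Rk k)^T *m A *m Pk k = Pi k.
Proof.
case: k => [|k] C; first by rewrite bcgP0.
rewrite bcgR_of_P linearB /= !mulmxBl trmx_mul -!mulmxA.
have [_ PAP0 _] := C k k.+1 (ltnSn k) (leqnn _).
by rewrite [(Pk k)^T *m (A *m _)]mulmxA PAP0 mulmx0 subr0.
Qed.

Lemma PtAP_spd k : (k < l)%N -> bcg_conj k -> spd (Pi k).
Proof.
move=> kl C; apply: spd_congr => // v Pv0.
apply: (mulmx_unit_eq0 (RtR_unitmx kl)).
by rewrite -(RtP_diag C) -mulmxA Pv0 mulmx0.
Qed.

Lemma PtAP_unitmx k : (k < l)%N -> bcg_conj k -> Pi k \in unitmx.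
Proof. by move=> kl C; apply/spd_unitmx/PtAP_spd. Qed.

Lemma trmxP_A k : (k < l)%N -> bcg_conj k ->
  (Pk k)^T *m A = Pi k *m invmx (S k) *m (Rk k - Rk k.+1)^T.
Proof.
move=> kl C; have AP : A *m Pk k = (Rk k - Rk k.+1) *m invmx (S k) *m Pi k.
  rewrite bcgRS opprB addrC subrK /Ups.
  move: (RtR_unitmx kl) (PtAP_unitmx kl C); move: (S k) (Pi k) => s p us up.
  by rewrite !mulmxA mulmxK // mulmxKV.
rewrite -[LHS]trmxK trmx_mul sA trmxK AP trmx_mul PtAP_sym.
by rewrite trmx_mul trmx_inv RtR_sym mulmxA.
Qed.

Lemma bcg_conjS k : (k.+1 < l)%N -> bcg_conj k -> bcg_conj k.+1.
Proof.
move=> kl C; have kl' : (k < l)%N := ltn_trans (ltnSn k) kl.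
have RR0 i : (i <= k)%N -> (Rk i)^T *m Rk k.+1 = 0.
  rewrite bcgRS mulmxBr leq_eqVlt => /predU1P[->|ik].
    by rewrite !mulmxA RtAP_diag // /Ups mulmxV ?mul1mx ?subrr ?PtAP_unitmx.
  have [-> _ _] := C i k ik (leqnn _); rewrite sub0r -!mulmxA.
  rewrite trmxR_eq0_of_P ?oppr0 // => j ji.
  by have [_ PAP0 _] := C j k (leq_ltn_trans ji ik) (leqnn _); rewrite !mulmxA PAP0 !mul0mx.
have PAP0 i : (i <= k)%N -> (Pk i)^T *m A *m Pk k.+1 = 0.
  move=> ik; have il : (i < l)%N := leq_ltn_trans ik kl'.
  have Ci := bcg_conj_le ik C.
  have PAR : (Pk i)^T *m A *m Rk k.+1 =
      - (Pi i *m invmx (S i) *m ((Rk i.+1)^T *m Rk k.+1)).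
    by rewrite [in LHS]trmxP_A // -mulmxA linearB /= mulmxBl (RR0 i ik) sub0r mulmxN.
  rewrite bcgPS mulmxDr PAR [X in _ + X]mulmxA.
  move: ik; rewrite leq_eqVlt => /predU1P[->|ik]; first by rewrite [X in _ + X]mulmxA addNr.
  by have [_ -> _] := C i k ik (leqnn _); rewrite RR0 // mulmx0 oppr0 mul0mx addr0.
move=> i j ij; rewrite leq_eqVlt => /predU1P[jk|]; last exact: C.
rewrite jk in ij *; split; [exact: RR0 ij | exact: PAP0 ij |].
by apply: trmxP_eq0_of_R => i' i'i; apply/RR0/(leq_trans i'i).
Qed.

Lemma bcg_conj_lt k : (k < l)%N -> bcg_conj k.
Proof.
elim: k => [_ i j ij|k IH kl]; first by rewrite leqn0 => /eqP j0; rewrite j0 in ij.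
exact/bcg_conjS/IH/(ltn_trans (ltnSn k)).
Qed.

Lemma bcgR_orth i j : (i < j)%N -> (j < l)%N -> (Rk i)^T *m Rk j = 0.
Proof. by move=> ij jl; have [] := bcg_conj_lt jl ij (leqnn _). Qed.

Lemma bcgP_conj i j : (i < j)%N -> (j < l)%N -> (Pk i)^T *m A *m Pk j = 0.
Proof. by move=> ij jl; have [] := bcg_conj_lt jl ij (leqnn _). Qed.

Lemma PtAR_gap i j : (i.+1 < j)%N -> (j < l)%N -> (Pk i)^T *m A *m Rk j = 0.
Proof.
move=> ij jl; have il : (i < l)%N := ltn_trans (ltn_trans (ltnSn i) ij) jl.
rewrite (trmxP_A il (bcg_conj_lt il)) -mulmxA linearB /= mulmxBl.
by rewrite !bcgR_orth ?subrr ?mulmx0 // (ltn_trans (ltnSn i) ij).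
Qed.

Lemma PtAR_next j : (j.+1 < l)%N ->
  (Pk j)^T *m A *m Rk j.+1 = - (Pi j *m invmx (S j) *m S j.+1).
Proof.
move=> jl; have jl' : (j < l)%N := ltn_trans (ltnSn j) jl.
rewrite [in LHS](trmxP_A jl' (bcg_conj_lt jl')) -mulmxA linearB /= mulmxBl.
by rewrite bcgR_orth // sub0r mulmxN.
Qed.

Lemma RtAR_gap i j : (i.+1 < j)%N -> (j < l)%N -> (Rk i)^T *m A *m Rk j = 0.
Proof.
move=> ij jl; rewrite -mulmxA; apply: trmxR_eq0_of_P => i' i'i.
by rewrite mulmxA PtAR_gap // (@leq_ltn_trans i.+1 i'.+1 j i'i ij).
Qed.

Lemma RtAR_next j : (j.+1 < l)%N ->
  (Rk j)^T *m A *m Rk j.+1 = - (Pi j *m invmx (S j) *m S j.+1).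
Proof.
case: j => [|j] jl; first by rewrite -bcgP0 PtAR_next.
rewrite bcgR_of_P linearB /= !mulmxBl PtAR_next // trmx_mul -!mulmxA.
by rewrite [(Pk j)^T *m (A *m _)]mulmxA PtAR_gap ?mulmx0 ?subr0.
Qed.

Lemma RtAR_diag j : (j.+1 < l)%N ->
  (Rk j.+1)^T *m A *m Rk j.+1 = Pi j.+1 + (Xi j)^T *m Pi j *m Xi j.
Proof.
move=> jl; have PAP0 := bcgP_conj (ltnSn j) jl.
have PAP0' : (Pk j.+1)^T *m A *m Pk j = 0.
  by have := congr1 trmx PAP0; rewrite !trmx_mul trmxK sA trmx0 mulmxA.
rewrite bcgR_of_P; move: (Pk j.+1) (Pk j) (Xi j) PAP0 PAP0' => P' P X PAP0 PAP0'.
have PAP0X (Y : 'M[R]_m) : Y *m P^T *m A *m P' = 0.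
  have -> : Y *m P^T *m A *m P' = Y *m (P^T *m A *m P') by rewrite !mulmxA.
  by rewrite PAP0 mulmx0.
rewrite [(P' - _)^T]linearB /= trmx_mul !mulmxBl !mulmxBr !mulmxA.
by rewrite PAP0X PAP0' mul0mx subr0 sub0r opprK.
Qed.

Let uA : A \in unitmx := spd_unitmx pA.

Lemma Err_residual k : Err A B X0 k = (Rk k)^T *m invmx A *m Rk k.
Proof.
rewrite /Err /Xsol bcgR_residual.
have -> : invmx A *m B - Xk k = invmx A *m (B - A *m Xk k) by rewrite mulmxBr mulKmx.
by rewrite trmx_mul trmx_inv sA mulmxA mulmxKV.
Qed.

Lemma Err_sub_succ k : (k < l)%N -> Err A B X0 k - Err A B X0 k.+1 = Theta A B X0 k.
Proof.
move=> kl; have C := bcg_conj_lt kl.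
rewrite !Err_residual bcgRS invmx_qf_update // RtP_diag // PtR_diag // /Theta /Ups.
have uPi := PtAP_unitmx kl C.
by rewrite trmx_mul trmx_inv PtAP_sym RtR_sym mulmxKV // mulmxA addrK.
Qed.

End Conjugacy.

Section Shifted.
Variables (R : realType) (n m : nat) (A : 'M[R]_n) (B X0 : 'M[R]_(n, m)) (mu : R).

Local Notation Rk := (bcgR A B X0).
Local Notation Pk := (bcgP A B X0).
Local Notation S := (RtR A B X0).
Local Notation Pi k := ((Pk k)^T *m A *m Pk k).
Local Notation Q := (A - mu%:M).

Fixpoint shiftY k : 'M[R]_(n, m) :=
  if k is k'.+1 then
    Rk k - shiftY k' *m invmx ((shiftY k')^T *m Q *m shiftY k') *m ((shiftY k')^T *m Q *m Rk k)
  else Rk 0.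

Definition shiftZ k := (shiftY k)^T *m Q *m shiftY k.

Lemma shiftYS k :
  shiftY k.+1 = Rk k.+1 - shiftY k *m invmx (shiftZ k) *m ((shiftY k)^T *m Q *m Rk k.+1).
Proof. by []. Qed.

Hypothesis pA : spd A.
Variable l : nat.
Hypothesis pS : forall i, (i < l)%N -> spd (S i).
Hypothesis pQ : spd Q.

Lemma shiftY_R j i : (j < i)%N -> (i < l)%N -> (shiftY j)^T *m Rk i = 0.
Proof.
elim: j i => [|j IH] i ji il; first exact: (bcgR_orth pA pS ji il).
rewrite shiftYS linearB /= mulmxBl (bcgR_orth pA pS) // !trmx_mul -!mulmxA.
by rewrite IH ?mulmx0 ?subrr // ltnW.
Qed.

Lemma shiftY_AR j i : (j.+1 < i)%N -> (i < l)%N -> (shiftY j)^T *m A *m Rk i = 0.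
Proof.
elim: j i => [|j IH] i ji il; first exact: (RtAR_gap pA pS ji il).
rewrite shiftYS linearB /= !mulmxBl (RtAR_gap pA pS) // !trmx_mul -!mulmxA.
by rewrite [(shiftY j)^T *m (A *m _)]mulmxA IH ?mulmx0 ?subrr // ltnW.
Qed.

Lemma shiftY_QR j : (j.+1 < l)%N ->
  (shiftY j)^T *m Q *m Rk j.+1 = - (Pi j *m invmx (S j) *m S j.+1).
Proof.
move=> jl; rewrite mulmxBr mulmxBl mul_mx_scalar -scalemxAl shiftY_R // scaler0 subr0.
case: j jl => [|j] jl; first exact: (RtAR_next pA pS jl).
rewrite shiftYS linearB /= !mulmxBl (RtAR_next pA pS) // !trmx_mul -!mulmxA.
by rewrite [(shiftY j)^T *m (A *m _)]mulmxA shiftY_AR ?mulmx0 ?subr0.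
Qed.

Lemma RtshiftY j : (j < l)%N -> (Rk j)^T *m shiftY j = S j.
Proof.
case: j => [//|j] jl; rewrite shiftYS mulmxBr.
have RY0 : (Rk j.+1)^T *m shiftY j = 0.
  by rewrite -[LHS]trmxK trmx_mul trmxK shiftY_R ?trmx0.
by rewrite !mulmxA RY0 !mul0mx subr0.
Qed.

Lemma shiftZ_spd j : (j < l)%N -> spd (shiftZ j).
Proof.
move=> jl; apply: spd_congr => // v Yv0; apply: (mulmx_unit_eq0 (RtR_unitmx pS jl)).
by rewrite -(RtshiftY jl) -mulmxA Yv0 mulmx0.
Qed.

Lemma shiftZS j : (j.+1 < l)%N ->
  shiftZ j.+1 = (Rk j.+1)^T *m Q *m Rk j.+1 -
    ((shiftY j)^T *m Q *m Rk j.+1)^T *m invmx (shiftZ j) *m ((shiftY j)^T *m Q *m Rk j.+1).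
Proof.
move=> jl; rewrite /shiftZ shiftYS qf_sub_proj ?(spd_sym pQ) //.
exact/spd_unitmx/shiftZ_spd/(ltn_trans (ltnSn j)).
Qed.

Definition shiftK j := Pi j - shiftZ j.

Lemma shiftK0 : shiftK 0 = mu *: S 0.
Proof.
rewrite /shiftK /shiftZ (_ : shiftY 0 = Rk 0) // bcgP0 /RtR; move: (Rk 0) => R0.
by rewrite mulmxBr mulmxBl mul_mx_scalar -scalemxAl opprB addrC subrK.
Qed.

Lemma RtQR k : (Rk k)^T *m Q *m Rk k = (Rk k)^T *m A *m Rk k - mu *: S k.
Proof. by rewrite [(Rk k)^T *m Q]mulmxBr mulmxBl mul_mx_scalar -scalemxAl. Qed.

Lemma shiftKS j : (j.+1 < l)%N ->
  shiftK j.+1 = mu *: S j.+1 + S j.+1 *m (invmx (S j) *m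
    (shiftK j + shiftK j *m invmx (shiftZ j) *m shiftK j) *m invmx (S j)) *m S j.+1.
Proof.
move=> jl; have jl' : (j < l)%N := ltn_trans (ltnSn j) jl.
have uZ := spd_unitmx (shiftZ_spd jl').
rewrite -(mulmx_invmx_sub _ uZ) {1 2 3}/shiftK subrK.
rewrite /shiftK shiftZS // shiftY_QR // RtQR (RtAR_diag pA pS) //.
have sPi := PtAP_sym B X0 pA j; have sS := RtR_sym A B X0 j.
have sS' := RtR_sym A B X0 j.+1.
move: (Pi j.+1) (Pi j) (S j) (S j.+1) (invmx (shiftZ j)) sPi sS sS' => P' P T T' iZ sP sT sT'.
rewrite !linearN /= !trmx_mul !trmx_inv sP sT sT' !(mulmxBr, mulmxBl, mulNmx, mulmxA).
move: (T' *m invmx T *m P *m invmx T *m T') (T' *m invmx T *m P *m iZ *m P *m invmx T *m T').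
by move=> a b; apply/matrixP => i k; rewrite !mxE; ring.
Qed.

Lemma Theta_mu_sub_Theta j : (j < l)%N -> spd (shiftK j) ->
  Theta_mu A B X0 mu j = S j *m invmx (shiftK j) *m S j ->
  Theta_mu A B X0 mu j - Theta A B X0 j =
  S j *m invmx (shiftK j + shiftK j *m invmx (shiftZ j) *m shiftK j) *m S j.
Proof.
move=> jl pK ->; have uPi := PtAP_unitmx pA pS jl (bcg_conj_lt pA pS jl).
rewrite /Theta /Ups (mulmxA (S j) (invmx (Pi j))) -mulmxBl -mulmxBr.
rewrite -[in invmx (Pi j)](subrK (shiftZ j) (Pi j)) invmx_sub_invmx_add //.
- exact: spd_unitmx.
- exact/spd_unitmx/shiftZ_spd.
- by rewrite /shiftK subrK.
Qed.

Hypothesis mu0 : 0 < mu.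

Lemma shiftK_spd_Theta_mu j : (j < l)%N ->
  spd (shiftK j) /\ Theta_mu A B X0 mu j = S j *m invmx (shiftK j) *m S j.
Proof.
elim: j => [l0|j IH jl].
  have uS := RtR_unitmx pS l0; rewrite shiftK0; split; first exact: spdZ (pS l0).
  rewrite invmxZ ?unitmxZ ?unitfE ?gt_eqF // -scalemxAr -scalemxAl mulmxV // mul1mx.
  by rewrite /Theta_mu /= mul_mx_scalar.
have jl' : (j < l)%N := ltn_trans (ltnSn j) jl.
have [pK eTheta] := IH jl'; have uS := RtR_unitmx pS jl'.
have pM := spd_add_sandwich pK (shiftZ_spd jl').
move: pM (Theta_mu_sub_Theta jl' pK eTheta) (shiftKS jl).
set M := _ + _ => pM eD eK.
have pD : spd (Theta_mu A B X0 mu j - Theta A B X0 j).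
  by rewrite eD -{1}(RtR_sym A B X0 j); apply: spd_unit_congr => //; apply: spd_invmx.
have eDinv : invmx (S j *m invmx M *m S j) = invmx (S j) *m M *m invmx (S j).
  have uM := spd_unitmx pM.
  rewrite (@invmxM _ _ (S j *m invmx M)) ?unitmx_mul ?unitmx_inv ?uS ?uM //.
  by rewrite (@invmxM _ _ (S j)) ?unitmx_inv // invmxK mulmxA.
have -> : Theta_mu A B X0 mu j.+1 = S j.+1 *m (invmx (mu *: (Theta_mu A B X0 mu j -
    Theta A B X0 j) + S j.+1) *m (Theta_mu A B X0 mu j - Theta A B X0 j)) by [].
rewrite mul_invmx_scale_add //; last exact: pS.
rewrite eD eDinv -eK; split=> //.
rewrite eK; apply: spdD_psd; first exact: spdZ (pS jl).
rewrite -{1}(RtR_sym A B X0 j.+1); apply/psd_congr/spd_psd.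
by rewrite -eDinv -eD; apply: spd_invmx.
Qed.

Lemma Theta_mu_sub_Theta_spd j : (j < l)%N -> spd (Theta_mu A B X0 mu j - Theta A B X0 j).
Proof.
move=> jl; have [pK eTheta] := shiftK_spd_Theta_mu jl.
rewrite Theta_mu_sub_Theta // -{1}(RtR_sym A B X0 j).
apply: (spd_unit_congr _ (RtR_unitmx pS jl)).
exact/spd_invmx/(spd_add_sandwich pK (shiftZ_spd jl)).
Qed.

End Shifted.

Unset Implicit Arguments.

Theorem theorem7 (R : realType) (n m : nat) (A : 'M[R]_n) (B X0 : 'M[R]_(n, m))
    (mu : R) (l : nat) :
  spd A ->
  0 < mu -> lt_lambda_min mu A ->
  (1 <= l)%N ->
  (forall j, (j < l)%N -> \rank (bcgR A B X0 j) = m) ->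
  (forall j, (1 <= j <= l)%N -> Mmu A B X0 mu j \in unitmx) /\
  (forall k, (1 <= k <= l)%N ->
     Theta_mu A B X0 mu k.-1 - Err A B X0 k.-1 =
     \sum_(k <= j < l.+1) Bmu A B X0 mu j
       + (Theta_mu A B X0 mu l - Err A B X0 l)) /\
  (forall j, (1 <= j <= l)%N -> spd (Bmu A B X0 mu j)) /\
  (bcgR A B X0 l = 0 ->
   forall k, (1 <= k <= l)%N -> spd (Theta_mu A B X0 mu k.-1 - Err A B X0 k.-1)).
Proof.
move=> pA mu0 lam_mu _ rankR.
have pS i : (i < l)%N -> spd (RtR A B X0 i) by move=> il; apply/spd_gram/rankR.
have pD := Theta_mu_sub_Theta_spd pA pS (spd_sub_lt_lambda_min pA lam_mu) mu0.
pose f k := Theta_mu A B X0 mu k - Err A B X0 k.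
have Bmu_f k : (k < l)%N -> Bmu A B X0 mu k.+1 = f k - f k.+1.
  move=> kl; rewrite /Bmu /f /= -(Err_sub_succ pA pS kl).
  move: (Theta_mu _ _ _ _ k) (Theta_mu _ _ _ _ k.+1) (Err A B X0 k) (Err A B X0 k.+1).
  by move=> a b c d; apply/matrixP => i j; rewrite !mxE; ring.
have decomp k : (k < l)%N -> f k = \sum_(k.+1 <= j < l.+1) Bmu A B X0 mu j + f l.
  move=> kl; rewrite (telescope_sumr_eq (fun j => - f j.-1)) /=.
  - by rewrite opprK addrAC addNr add0r.
  - by rewrite ltnS ltnW.
  - by case=> // j /andP[_ jl]; rewrite Bmu_f // addrC opprK.
have pBmu j : (1 <= j <= l)%N -> spd (Bmu A B X0 mu j).
  case: j => // j /andP[_ jl].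
  exact: spd_sub_mul_invmx_scale_add mu0 (pD j jl) (psd_gram _).
split.
  case=> // j /andP[_ jl]; apply/spd_unitmx/spdD_psd; last exact: psd_gram.
  exact: spdZ mu0 (pD j jl).
split; first by case=> // k /andP[_ kl]; apply: decomp.
split=> // Rl0 [//|k] /andP[_ kl].
have fl0 : f l = 0 by rewrite /f /Theta_mu /RtR (Err_residual B X0 pA) Rl0 !mulmx0 !mul0mx subrr.
rewrite /= -/(f k) decomp // fl0 addr0; apply: spd_sum_nat => // j /andP[kj jl].
by apply: pBmu; rewrite (leq_trans (ltn0Sn k) kj).
Qed.
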